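(* Let $\Lambda\subseteq\Sigma_A$ be a shift space, let $x\in\Lambda^{\mathrm{fin}}$ and let $F\subset L_\Lambda$ be a nonempty finite set. Then $Z(x)\cap\Lambda$ and $Z(x,F)\cap\Lambda$ are finitely defined sets in $\Lambda$. The anticipation of $Z(x)\cap\Lambda$ is $l(x)-1$ and the anticipation of $Z(x,F)\cap\Lambda$ is $l(x)$.
   Context: $A$ is a countable discrete alphabet; $\varepsilon$ is a new symbol (empty letter), $\tilde A=A\cup\{\varepsilon\}$. $\Sigma_A$ consists of $A^{\mathbb N}$ together with (when $A$ is infinite) the finite sequences: sequences in $\tilde A$ containing some $\varepsilon$, with all entries after the first $\varepsilon$ equal to $\varepsilon$. The length $l(x)$ is the number of entries before the first $\varepsilon$ ($\infty$ if none); $\mathcal O=(\varepsilon\varepsilon\dots)$ is the empty sequence. For finite $x$ and finite $F\subset A$: $Z(x,F)=\{y\in\Sigma_A: y_i=x_i\ (1\le i\le l(x)),\ y_{l(x)+1}\notin F\}$ and $Z(x)=Z(x,\emptyset)$; these generate the topology of $\Sigma_A$. The shift is $\sigma((x_i)_i)=(x_{i+1})_i$. For $\Lambda\subseteq\Sigma_A$: $\Lambda^{\mathrm{fin}}$ is the set of finite sequences in $\Lambda$; $B_n(\Lambda)\subseteq\tilde A^n$ is the set of length-$n$ words occurring consecutively in elements of $\Lambda$, $B(\Lambda)=\bigcup_n B_n(\Lambda)$, $L_\Lambda=B_1(\Lambda)\setminus\{\varepsilon\}$; $\mathcal F(\Lambda,a)=\{b\in B_1(\Lambda): ab\in B(\Lambda)\}$.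 A shift space is a closed $\Lambda\subseteq\Sigma_A$ with $\sigma(\Lambda)\subseteq\Lambda$ such that $\mathcal O\in\Lambda$ iff $L_\Lambda$ is infinite, and a finite $x\neq\mathcal O$ lies in $\Lambda$ iff $\mathcal F(\Lambda,x)$ is infinite. A set $C\subseteq\Lambda$ is finitely defined in $\Lambda$ if there exist $I,J\subseteq\mathbb N$, integers $\ell_i,n_j\ge0$ and words $b_i,d_j\in B(\Sigma_A)$ with $C=\{x\in\Lambda: (x_1\dots x_{1+\ell_i})=b_i\text{ for some } i\in I\}$ and $\Lambda\setminus C=\{x\in\Lambda: (x_1\dots x_{1+n_j})=d_j\text{ for some } j\in J\}$; then $C$ is said to have anticipation $\sup_{i\in I}\ell_i$. *)

From mathcomp Require Import all_boot.
Set Implicit Arguments. Unset Strict Implicit. Unset Printing Implicit Defensive.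

(* The empty letter epsilon is
   [None]; tilde A = option A.  A sequence x = (x_1 x_2 ...) is represented by
   a function [x : nat -> option A] with x_i = x (i-1) (0-based storage). *)
Section Shifts.
Variable A : countType.
Definition sq := nat -> option A.

Definition inf_set (T : eqType) (P : T -> Prop) : Prop :=
  forall l : seq T, exists t, P t /\ t \notin l.

Definition alph_infinite : Prop := forall l : seq A, exists a : A, a \notin l.

(* Sigma_A : A^N, together with (if A is infinite) the finite sequences *)
Definition inSigma (x : sq) : Prop :=
  (forall i, x i <> None) \/
  (alph_infinite /\ (exists i, x i = None) /\
   forall i j, i <= j -> x i = None -> x j = None).

Definition len_is (x : sq) (n : nat) : Prop :=
  (forall i, i < n -> x i <> None) /\ x n = None.

Definition is_fin (x : sq) : Prop := exists i, x i = None.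

Definition emptyseq : sq := fun _ => None.

(* Z(x,F) = {y in Sigma_A : y_i = x_i (1 <= i <= l(x)), y_{l(x)+1} \notin F};
   Z(x) = Z(x, [::]) *)
Definition Zs (x : sq) (F : seq A) (y : sq) : Prop :=
  inSigma y /\ exists n, len_is x n /\ (forall i, i < n -> y i = x i) /\
    (forall a, a \in F -> y n <> Some a).

(* closed in the topology of Sigma_A generated by the sets Z(x,F), x finite,
   F finite: the complement (in Sigma_A) is a union of finite intersections
   of generating sets *)
Definition closedS (L : sq -> Prop) : Prop :=
  forall y, inSigma y -> ~ L y ->
    exists (k : nat) (xs : nat -> sq) (Fs : nat -> seq A),
      (forall j, j < k -> is_fin (xs j)) /\
      (forall j, j < k -> Zs (xs j) (Fs j) y) /\
      (forall z, inSigma z -> (forall j, j < k -> Zs (xs j) (Fs j) z) -> ~ L z).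

Definition shift (x : sq) : sq := fun i => x i.+1.

Definition occurs (L : sq -> Prop) (w : seq (option A)) : Prop :=
  exists y k, L y /\ forall i, i < size w -> y (k + i) = nth None w i.

(* L_Lambda = B_1(Lambda) \ {epsilon} *)
Definition Lset (L : sq -> Prop) (a : A) : Prop := occurs L [:: Some a].

Definition Fol (L : sq -> Prop) (x : sq) (b : option A) : Prop :=
  exists n, len_is x n /\ occurs L [:: b] /\ occurs L (rcons (mkseq x n) b).

Definition shift_space (L : sq -> Prop) : Prop :=
  (forall x, L x -> inSigma x) /\
  closedS L /\
  (forall x, L x -> L (shift x)) /\
  (L emptyseq <-> inf_set (Lset L)) /\
  (forall x, inSigma x -> is_fin x -> ~ (forall i, x i = None) ->
     (L x <-> inf_set (Fol L x))).

(* C is finitely defined in L, via a representation whose sup of the l_i is k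
   (the anticipation). (x_1 ... x_{1+l}) is [mkseq y l.+1]. *)
Definition fin_def_antic (L : sq -> Prop) (C : sq -> Prop) (k : nat) : Prop :=
  exists (I J : nat -> Prop) (l m : nat -> nat) (b d : nat -> seq (option A)),
    (forall i, I i -> size (b i) = (l i).+1 /\ occurs inSigma (b i)) /\
    (forall j, J j -> size (d j) = (m j).+1 /\ occurs inSigma (d j)) /\
    (forall y, C y <-> (L y /\ exists i, I i /\ mkseq y (l i).+1 = b i)) /\
    (forall y, (L y /\ ~ C y) <-> (L y /\ exists j, J j /\ mkseq y (m j).+1 = d j)) /\
    (forall i, I i -> l i <= k) /\
    (forall k', (forall i, I i -> l i <= k') -> k <= k').

End Shifts.

From mathcomp Require Import all_boot.

Set Implicit Arguments.
Unset Strict Implicit.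
Unset Printing Implicit Defensive.

(* Membership in Z(x) or Z(x,F) only depends on the first l(x), resp.
   l(x)+1, entries of a sequence.  Any set cut out of Lambda by a condition
   on the prefix of length K+1 is finitely defined with anticipation K: its
   defining words are the prefixes (of elements of Lambda) satisfying the
   condition, and those of its complement the prefixes violating it;
   countability of the alphabet lets us index these words by [nat] through
   [unpickle].  The anticipation is exactly K as soon as one defining word
   exists, and x itself supplies one. *)

Section PrefixDefined.
Variables (A : countType) (L : sq A -> Prop).
Hypothesis L_Sigma : forall y, L y -> inSigma y.

Lemma occurs_mkseq (y : sq A) k : L y -> occurs L (mkseq y k).
Proof.
move=> Ly; exists y, 0; split=> // i Hi.
by rewrite add0n nth_mkseq // -(size_mkseq y k).
Qed.

Lemma occurs_Sigma (w : seq (option A)) : occurs L w -> occurs (@inSigma A) w.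
Proof. by move=> [y [k [Ly Hy]]]; exists y, k; split=> //; apply: L_Sigma. Qed.

Variables (K : nat) (P : seq (option A) -> Prop).

Let word (i : nat) : seq (option A) := odflt [::] (unpickle i).

Let word_pickle (y : sq A) : word (pickle (mkseq y K.+1)) = mkseq y K.+1.
Proof. by rewrite /word pickleK. Qed.

Let defining (Q : seq (option A) -> Prop) (i : nat) : Prop :=
  size (word i) = K.+1 /\ occurs L (word i) /\ Q (word i).

Let defining_pickle (Q : seq (option A) -> Prop) (y : sq A) :
  L y -> Q (mkseq y K.+1) -> defining Q (pickle (mkseq y K.+1)).
Proof.
move=> Ly Qy; rewrite /defining word_pickle size_mkseq.
by split=> //; split=> //; apply: occurs_mkseq.
Qed.

Let defining_Sigma (Q : seq (option A) -> Prop) i :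
  defining Q i -> size (word i) = K.+1 /\ occurs (@inSigma A) (word i).
Proof. by move=> [Hsize [Hocc _]]; split; last exact: occurs_Sigma. Qed.

Lemma fin_def_antic_prefix (C : sq A -> Prop) :
  (forall y, C y <-> L y /\ P (mkseq y K.+1)) ->
  (exists y, L y /\ P (mkseq y K.+1)) ->
  fin_def_antic L C K.
Proof.
move=> CE [y0 [Ly0 Py0]].
exists (defining P), (defining (fun w => ~ P w)),
  (fun _ => K), (fun _ => K), word, word.
split; first exact: defining_Sigma.
split; first exact: defining_Sigma.
split.
  move=> y; split.
    by move=> /CE [Ly Py]; split=> //; exists (pickle (mkseq y K.+1));
      rewrite word_pickle; split=> //; apply: defining_pickle.
  by move=> [Ly [i [[_ [_ Pi]] Ei]]]; apply/CE; rewrite Ei.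
split.
  move=> y; split.
    move=> [Ly NCy]; split=> //; exists (pickle (mkseq y K.+1)).
    rewrite word_pickle; split=> //; apply: defining_pickle => // Py.
    by apply: NCy; apply/CE.
  by move=> [Ly [j [[_ [_ NPj]] Ej]]]; split=> // /CE [_]; rewrite Ej.
split=> // k' bound_k'.
exact: (bound_k' _ (defining_pickle Ly0 Py0)).
Qed.

End PrefixDefined.

Section Cylinders.
Variable A : countType.

Lemma len_is_uniq (x : sq A) m n : len_is x m -> len_is x n -> m = n.
Proof.
move=> [Hm Nm] [Hn Nn]; case: (ltngtP m n) => // lt.
  by move: (Hn _ lt); rewrite Nm.
by move: (Hm _ lt); rewrite Nn.
Qed.

Lemma ZsE (x : sq A) (F : seq A) n y : len_is x n ->
  Zs x F y <->
  [/\ inSigma y, forall i, i < n -> y i = x i & forall a, a \in F -> y n <> Some a].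
Proof.
move=> xn; split.
  by move=> [Sy [m [xm [Ey NFy]]]]; rewrite (len_is_uniq xm xn) in Ey NFy.
by move=> [Sy Ey NFy]; split=> //; exists n.
Qed.

Definition agrees_upto (x : sq A) n (w : seq (option A)) : Prop :=
  forall i, i < n -> nth None w i = x i.

Lemma agrees_upto_mkseq (x y : sq A) n k : n <= k ->
  agrees_upto x n (mkseq y k) <-> (forall i, i < n -> y i = x i).
Proof.
move=> le_nk; split=> E i lt_in; move: (E i lt_in);
  by rewrite nth_mkseq // (leq_trans lt_in le_nk).
Qed.

End Cylinders.

Theorem mainTheorem3 (A : countType) (L : sq A -> Prop) (x : sq A) (F : seq A)
  (n : nat) :
  shift_space L -> L x -> len_is x n ->
  F <> [::] -> (forall a, a \in F -> Lset L a) ->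
  fin_def_antic L (fun y => Zs x [::] y /\ L y) (n - 1) /\
  fin_def_antic L (fun y => Zs x F y /\ L y) n.
Proof.
move=> [L_Sigma _] Lx xn _ _.
have le_n_n1 : n <= (n - 1).+1 by rewrite -add1n -leq_subLR.
split.
  apply: (fin_def_antic_prefix L_Sigma (P := agrees_upto x n)) => [y|].
    split=> [[/(ZsE _ _ xn) [_ Ey _] Ly]|[Ly /(agrees_upto_mkseq _ _ le_n_n1) Ey]].
      by split=> //; apply/agrees_upto_mkseq.
    by split=> //; apply/(ZsE _ _ xn); split=> //; apply: L_Sigma.
  by exists x; split=> //; apply/agrees_upto_mkseq.
apply: (fin_def_antic_prefix L_Sigma
  (P := fun w => agrees_upto x n w /\ forall a, a \in F -> nth None w n <> Some a)).
  move=> y; rewrite nth_mkseq //.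
  split=> [[/(ZsE _ _ xn) [_ Ey NFy] Ly]|[Ly [/(agrees_upto_mkseq _ _ (leqnSn n)) Ey NFy]]].
    by split=> //; split=> //; apply/agrees_upto_mkseq.
  by split=> //; apply/(ZsE _ _ xn); split=> //; apply: L_Sigma.
exists x; split=> //; rewrite nth_mkseq //; split; first exact/agrees_upto_mkseq.
by case: xn => _ ->.
Qed.
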